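(* For $n\ge 3$, $M_2(WC_n)\simeq M_2(CC_n)$, where $WC_n$ is the fully whiskered $2n$-cycle graph and $CC_n$ is the clawed $n$-cycle.
   Context: The fully whiskered graph of a graph $G$ is obtained by attaching a leaf to every vertex of $G$; $WC_n$ is the fully whiskered graph of the cycle on $2n$ vertices. For a graph $G$ of maximum degree at most $3$, the clawed graph $CG$ is obtained by subdividing every edge of $G$ and then attaching new leaves to every original vertex so that every original vertex has degree exactly $3$; $CC_n$ is the clawed graph of the cycle on $n$ vertices. $M_2(G)$ is the simplicial complex whose vertices are the edges of $G$ and whose faces are the $2$-matchings of $G$ (edge sets in which every vertex has degree at most $2$). *)

From HB Require Import structures.
From mathcomp Require Import all_boot all_order all_algebra.
From mathcomp Require Import all_classical all_reals topology.
From mathcomp Require Import Rstruct Rstruct_topology.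
Set Implicit Arguments. Unset Strict Implicit. Unset Printing Implicit Defensive.
Import Order.TTheory GRing.Theory Num.Theory.
Local Open Scope classical_set_scope.
Local Open Scope ring_scope.

Notation R := Rdefinitions.R.

(** Geometric realization of an abstract simplicial complex on the finite
    vertex set [V] whose faces are the sets satisfying [K]: the points of
    the standard simplex in R^V (product topology) whose support is a face. *)
Definition realization (V : finType) (K : pred {set V}) : set {ptws V -> R} :=
  [set x : {ptws V -> R} | (forall v, 0 <= x v) /\ \sum_(v : V) x v = 1
                           /\ K (finset (fun v : V => x v != 0))].

Definition homotopic_on (X Y : topologicalType) (A : set X) (B : set Y)
    (f g : X -> Y) : Prop :=
  exists H : R * X -> Y,
    {within [set p : R * X | 0 <= p.1 <= 1 /\ A p.2], continuous H} /\
    (forall t x, 0 <= t <= 1 -> A x -> B (H (t, x))) /\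
    (forall x, A x -> H (0, x) = f x) /\
    (forall x, A x -> H (1, x) = g x).

Definition homotopy_equivalent (X Y : topologicalType) (A : set X) (B : set Y)
    : Prop :=
  exists (f : X -> Y) (g : Y -> X),
    {within A, continuous f} /\ (forall x, A x -> B (f x)) /\
    {within B, continuous g} /\ (forall y, B y -> A (g y)) /\
    homotopic_on A A (g \o f) id /\ homotopic_on B B (f \o g) id.

Local Close Scope classical_set_scope.
Local Open Scope set_scope.

(** A graph on the vertex type T is given by its edge set E, each edge
    being a 2-element subset of T. *)
Definition edge_type (T : finType) (E : {set {set T}}) : finType :=
  {e : {set T} | e \in E}.

(** M_2(G): vertices are the edges of G, faces are the 2-matchings,
    i.e. edge sets in which every vertex of G has degree at most 2. *)
Definition M2 (T : finType) (E : {set {set T}}) : pred {set edge_type E} :=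
  fun F => [forall v : T, #|finset (fun e : edge_type E => (e \in F) && (v \in val e))| <= 2]%N.

Arguments M2 {T} E F.

(** WC_n: the fully whiskered graph of the cycle on 2n vertices.
    Vertices: inl i = cycle vertex i (i in Z/2n), inr i = leaf attached to it. *)
Definition WC_vertex (n : nat) : finType := ('I_(2 * n) + 'I_(2 * n))%type.
Definition WC_edges (n : nat) : {set {set WC_vertex n}} :=
  [set [set inl i; inl (ordS i)] | i : 'I_(2 * n)]
  :|: [set [set inl i; inr i] | i : 'I_(2 * n)].

(** Vertices: inl (inl i) = original vertex i (i in Z/n),
    inl (inr i) = subdivision vertex of the edge {i, i+1},
    inr i = new leaf attached to original vertex i. *)
Definition CC_vertex (n : nat) : finType := (('I_n + 'I_n) + 'I_n)%type.
Definition CC_edges (n : nat) : {set {set CC_vertex n}} :=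
  [set [set inl (inl i); inl (inr i)] | i : 'I_n]
  :|: [set [set inl (inr i); inl (inl (ordS i))] | i : 'I_n]
  :|: [set [set inl (inl i); inr i] | i : 'I_n].

From mathcomp Require Import all_boot all_order all_algebra.
From mathcomp Require Import all_classical all_reals topology.
From mathcomp Require Import Rstruct Rstruct_topology normedtype.
From mathcomp Require Import zify lra.
Set Implicit Arguments. Unset Strict Implicit. Unset Printing Implicit Defensive.
Import Order.TTheory GRing.Theory Num.Theory.
Local Open Scope ring_scope.

(** The clawed n-cycle is the whiskered 2n-cycle with the whiskers at the odd
    cycle vertices deleted (original vertex i becomes 2i, the subdivision vertex
    of {i, i+1} becomes 2i+1), so M_2(CC_n) is the subcomplex of M_2(WC_n)
    induced on the remaining edges.  A set of edges of WC_n is a 2-matching iff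
    no cycle vertex carries all three of its edges.  We deformation-retract
    |M_2(WC_n)| onto the subcomplex: at time t a fraction t of the weight of
    every odd whisker flows, partly via the next cycle edge, to the two
    neighbouring even whiskers, preserving the total weight and never giving
    positive weight to all three edges at a cycle vertex. *)

Section HomotopyEquivalence.
Local Open Scope classical_set_scope.
Variables (X Y : topologicalType) (A : set X) (B : set Y) (f : X -> Y) (g : Y -> X).

Lemma homotopy_equivalent_of_section :
  {within A, continuous f} -> (forall x, A x -> B (f x)) ->
  {within B, continuous g} -> (forall y, B y -> A (g y)) ->
  (forall y, B y -> f (g y) = y) -> homotopic_on A A (g \o f) id ->
  homotopy_equivalent A B.
Proof.
move=> fC fAB gC gBA gK gfH; exists f, g; do 5 split=> //.
exists snd; split; first by apply: continuous_subspaceT => p; exact: cvg_snd.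
split; first by move=> t y _ By.
by split=> y By //=; rewrite gK.
Qed.

End HomotopyEquivalence.

Section RealContinuity.
Variable T : topologicalType.
Implicit Types f g : T -> R.

Lemma continuous_add f g : continuous f -> continuous g -> continuous (fun x => f x + g x).
Proof. by move=> fC gC x; exact: (@continuousD _ R^o _ f g x (fC x) (gC x)). Qed.

Lemma continuous_sub f g : continuous f -> continuous g -> continuous (fun x => f x - g x).
Proof. by move=> fC gC x; exact: (@continuousB _ R^o _ f g x (fC x) (gC x)). Qed.

Lemma continuous_mul f g : continuous f -> continuous g -> continuous (fun x => f x * g x).
Proof. by move=> fC gC x; apply: cvgM; [exact: fC | exact: gC]. Qed.

Lemma continuous_maxr f g :
  continuous f -> continuous g -> continuous (fun x => Num.max (f x) (g x)).
Proof. by move=> fC gC x; apply: (@continuous_max _ _ f g); [exact: fC | exact: gC]. Qed.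

Lemma continuous_minr f g :
  continuous f -> continuous g -> continuous (fun x => Num.min (f x) (g x)).
Proof. by move=> fC gC x; apply: (@continuous_min _ _ f g); [exact: fC | exact: gC]. Qed.

End RealContinuity.

Lemma continuous_ptws (T V : topologicalType) (U : Type) (f : T -> {ptws U -> V}) :
  (forall u, continuous (fun x => f x u)) -> continuous f.
Proof.
move=> fC x; apply/cvg_sup => u A [_ [[W oW <-]] /= Wfx] /filterS; apply.
exact/fC/open_nbhs_nbhs.
Qed.

Section InducedSubcomplex.
Variables (V W : finType) (h : W -> V) (K : pred {set V}) (L : pred {set W}).
Hypotheses (h_inj : injective h) (L_K : forall F, L F = K (h @: F)).

Definition extend0 (y : W -> R) : V -> R :=
  fun v => if [pick w | h w == v] is Some w then y w else 0.

Lemma extend0E y w : extend0 y (h w) = y w.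
Proof. by rewrite /extend0; case: pickP => [w' /eqP/h_inj -> | /(_ w)/eqP]. Qed.

Lemma extend0_out y v : v \notin codom h -> extend0 y v = 0.
Proof. by rewrite /extend0; case: pickP => // w /eqP <-; rewrite codom_f. Qed.

Lemma sum_codom (z : V -> R) : (forall v, v \notin codom h -> z v = 0) ->
  \sum_v z v = \sum_w z (h w).
Proof.
move=> z0; rewrite (bigID (mem (codom h))) /= [X in _ + X]big1 ?addr0 //.
rewrite -(big_imset _ (in2W h_inj)) /=; apply: eq_bigl => v.
by apply/codomP/imsetP => -[w]; exists w.
Qed.

Lemma realization_codom (z : V -> R) : (forall v, v \notin codom h -> z v = 0) ->
  realization K z <-> realization L (z \o h).
Proof.
move=> z0; have supp : h @: [set w | z (h w) != 0] = [set v | z v != 0].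
  apply/setP => v; rewrite [RHS]inE; apply/imsetP/idP => [[w] | zv].
    by rewrite inE => zw ->.
  have /codomP [w vw] : v \in codom h by apply: contraNT zv => /z0 ->.
  by exists w; rewrite // inE -vw.
rewrite /realization /= L_K supp (sum_codom z0); split=> -[z_ge0 zK]; split=> // v.
by have [/codomP [w ->] | /z0 ->] := boolP (v \in codom h).
Qed.

Lemma extend0_realization y : realization L y -> realization K (extend0 y).
Proof.
move=> yL; apply/(realization_codom (extend0_out y)).
suff -> : extend0 y \o h = y by [].
by apply: funext => w; exact: extend0E.
Qed.

Section Retraction.
Variable r : R -> (V -> R) -> V -> R.
Hypotheses
  (r_continuous : forall v, continuous (fun p : R * {ptws V -> R} => r p.1 p.2 v))
  (r_realization : forall t x, 0 <= t <= 1 -> realization K x -> realization K (r t x))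
  (r0 : forall x, realization K x -> r 0 x = x)
  (r1_out : forall x, realization K x -> forall v, v \notin codom h -> r 1 x v = 0)
  (r1_id : forall x, realization K x -> (forall v, v \notin codom h -> x v = 0) -> r 1 x = x).

Let r_comp_continuous (T : topologicalType) (t : T -> R) (x : T -> {ptws V -> R}) v :
  continuous t -> continuous x -> continuous (fun z => r (t z) (x z) v).
Proof.
move=> tC xC z; apply: (@continuous2_cvg _ _ _ _ _ _ t x (fun a b => r a b v)).
- exact: (@r_continuous v (t z, x z)).
- exact: tC.
- exact: xC.
Qed.

Let r1_realization x : realization K x -> realization L (r 1 x \o h).
Proof.
move=> xK; apply/(realization_codom (r1_out xK)).
by apply: r_realization; rewrite ?ler01 ?lexx.
Qed.

Theorem realization_retract_homotopy_equivalent :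
  homotopy_equivalent (realization K) (realization L).
Proof.
apply: (@homotopy_equivalent_of_section _ _ _ _
  (fun x : {ptws V -> R} => r 1 x \o h : {ptws W -> R})
  (extend0 : {ptws W -> R} -> {ptws V -> R})).
- apply: continuous_subspaceT; apply: continuous_ptws => w x.
  by apply: r_comp_continuous => // ?; [exact: cvg_cst | exact: cvg_id].
- exact: r1_realization.
- apply: continuous_subspaceT; apply: continuous_ptws => v; rewrite /extend0.
  by case: pickP => [w _ | _]; [exact: proj_continuous | exact: cst_continuous].
- exact: extend0_realization.
- move=> y yL; rewrite r1_id; [|exact: extend0_realization|exact: extend0_out].
  by apply: funext => w; exact: extend0E.
exists (fun p : R * {ptws V -> R} => (r (1 - p.1) p.2 : {ptws V -> R})); split.
  apply: continuous_subspaceT; apply: continuous_ptws => v.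
  apply: (@r_comp_continuous _ (fun p : R * {ptws V -> R} => 1 - p.1) snd).
    by apply: continuous_sub; [exact: cst_continuous | move=> p; exact: cvg_fst].
  by move=> p; exact: cvg_snd.
split=> [t x /andP [t0 t1] xK | ].
  by apply: r_realization; rewrite // subr_ge0 t1 lerBlDr lerDl.
split=> x xK /=; last by rewrite subrr r0.
apply: funext => v; rewrite subr0.
have [/codomP [w ->] | vh] := boolP (v \in codom h); first by rewrite extend0E.
by rewrite extend0_out ?r1_out.
Qed.

End Retraction.
End InducedSubcomplex.

Lemma card_setI_set3 (T : finType) (F : {set T}) a b c : uniq [:: a; b; c] ->
  (#|F :&: [set a; b; c]| <= 2)%N = ~~ [&& a \in F, b \in F & c \in F].
Proof.
move=> abc; have S3 : #|[set a; b; c]| = 3%N.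
  rewrite -[3%N]/(size [:: a; b; c]) -(card_uniqP abc).
  by apply: eq_card => x; rewrite !inE orbA.
rewrite -ltnS -S3 (ltn_leqif (subset_leqif_cards (subsetIr _ _))).
by rewrite (sameP eqP finset.setIidPr) !finset.subUset !finset.sub1set andbA.
Qed.

Lemma sum_if_eq (V : nmodType) (I : finType) (P : pred I) (i : I) (F : I -> V) :
  \sum_(k | P k) (if i == k then F k else 0) = if P i then F i else 0.
Proof.
rewrite big_mkcond (bigD1 i) //= eqxx big1 ?addr0 // => k /negbTE.
by rewrite eq_sym => ->; case: (P k).
Qed.

Section PositivePart.
Variable F : realFieldType.
Implicit Types x y : F.

Lemma max0r_gt0 x : (0 < Num.max 0 x) = (0 < x).
Proof. by rewrite lt_max ltxx. Qed.

Lemma max0_subr_add_min x y :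
  Num.max 0 (x - y) + Num.max 0 (y - x) + 2 * Num.min x y = x + y.
Proof.
by rewrite minEle; case: (leP x y); case: (ler0P (x - y)); case: (ler0P (y - x)); lra.
Qed.

End PositivePart.

Section EdgeMap.
Variables (T S : finType) (E : {set {set T}}) (D : {set {set S}}) (f : S -> T).
Hypotheses (f_inj : injective f) (fD : forall e : edge_type D, f @: val e \in E).

Definition edge_map (e : edge_type D) : edge_type E := exist _ (f @: val e) (fD e).

Lemma edge_map_inj : injective edge_map.
Proof. by move=> e1 e2 [/(imset_inj f_inj)] /val_inj. Qed.

Lemma codom_edge_map (s : {set S}) (e : edge_type E) :
  s \in D -> f @: s = val e -> e \in codom edge_map.
Proof. by move=> sD fs; apply/codomP; exists (exist _ s sD); apply: val_inj. Qed.

Lemma M2_edge_map F : M2 D F = M2 E (edge_map @: F).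
Proof.
have deg u : [set e | (e \in edge_map @: F) && (f u \in val e)] =
             edge_map @: [set e | (e \in F) && (u \in val e)].
  apply/setP => e; rewrite inE; apply/andP/imsetP => [[/imsetP [e' e'F ->]] | [e' + ->]].
    by rewrite /= mem_imset // => ue'; exists e'; rewrite // inE e'F.
  by rewrite inE => /andP [e'F ue']; rewrite imset_f //= mem_imset.
apply/forallP/forallP => M v; last by rewrite -(card_imset _ edge_map_inj) -deg.
have [/codomP [u ->] | vf] := boolP (v \in codom f).
  by rewrite deg (card_imset _ edge_map_inj).
rewrite (_ : [set e | _] = finset.set0) ?cards0 //; apply/setP => e; rewrite !inE.
apply/andP => -[/imsetP [e' _ ->] /imsetP [u _ vu]].
by move: vf; rewrite vu codom_f.
Qed.

End EdgeMap.

Section CyclicOrdinals.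
Variable m : nat.
Implicit Type j : 'I_m.

Lemma val_ordS j : val (ordS j) = if j.+1 == m then 0%N else j.+1.
Proof.
rewrite /=; case: eqP => [-> | ?]; first by rewrite modnn.
by rewrite modn_small //; have := ltn_ord j; lia.
Qed.

Lemma odd_ordS j : ~~ odd m -> odd (ordS j) = ~~ odd j.
Proof. by rewrite val_ordS; case: eqP => [/(congr1 odd) /= <- /negbTE -> |]. Qed.

Lemma odd_ord_pred j : ~~ odd m -> odd (ord_pred j) = ~~ odd j.
Proof. by move=> m_even; rewrite -{2}(ord_predK j) odd_ordS // negbK. Qed.

Lemma ordS_neq j : (1 < m)%N -> ordS j != j.
Proof.
by move=> m_gt1; rewrite -val_eqE val_ordS /=; have := ltn_ord j; case: ifP => /eqP; lia.
Qed.

Lemma ordSS_neq j : (2 < m)%N -> ordS (ordS j) != j.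
Proof.
move=> m_gt2; rewrite -val_eqE !val_ordS /=; have := ltn_ord j.
by case: ifP => /eqP; case: ifP => /eqP; lia.
Qed.

Lemma eq_ordS j k : (j == ordS k) = (ord_pred j == k).
Proof. by apply/eqP/eqP => [-> | <-]; rewrite ?ordSK ?ord_predK. Qed.

Lemma eq_ord_pred j k : (j == ord_pred k) = (ordS j == k).
Proof. by apply/eqP/eqP => [-> | <-]; rewrite ?ordSK ?ord_predK. Qed.

End CyclicOrdinals.

Section WhiskeredCycle.
Variable n : nat.
Hypothesis n_gt1 : (1 < n)%N.

Local Notation EW := (edge_type (WC_edges n)).
Implicit Types (j k : 'I_(2 * n)) (e : EW).

Let N_even : ~~ odd (2 * n). Proof. by rewrite oddM. Qed.
Let N_gt2 : (2 < 2 * n)%N. Proof. lia. Qed.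

Fact cycle_edge_subproof (j : 'I_(2 * n)) : [set inl j; inl (ordS j)] \in WC_edges n.
Proof. by rewrite inE; apply/orP; left; apply/imsetP; exists j. Qed.
Fact whisker_subproof (j : 'I_(2 * n)) : [set inl j; inr j] \in WC_edges n.
Proof. by rewrite inE; apply/orP; right; apply/imsetP; exists j. Qed.

Definition cycle_edge j : EW := exist (fun s => s \in WC_edges n) _ (cycle_edge_subproof j).
Definition whisker j : EW := exist (fun s => s \in WC_edges n) _ (whisker_subproof j).

Lemma WC_edgeP (e : EW) : (exists j, e = cycle_edge j) \/ (exists j, e = whisker j).
Proof.
by have := valP e; rewrite inE => /orP [] /imsetP [j _ ej]; [left | right];
  exists j; apply: val_inj.
Qed.

Lemma inl_cycle_edge k j : (inl k \in val (cycle_edge j)) = (k == j) || (k == ordS j).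
Proof. by rewrite !inE. Qed.
Lemma inr_cycle_edge k j : (inr k \in val (cycle_edge j)) = false.
Proof. by rewrite !inE. Qed.
Lemma inl_whisker k j : (inl k \in val (whisker j)) = (k == j).
Proof. by rewrite !inE orbF. Qed.
Lemma inr_whisker k j : (inr k \in val (whisker j)) = (k == j).
Proof. by rewrite !inE. Qed.

Lemma cycle_edge_inj : injective cycle_edge.
Proof.
move=> j k jk.
have : inl j \in val (cycle_edge k) by rewrite -jk inl_cycle_edge eqxx.
have : inl (ordS j) \in val (cycle_edge k) by rewrite -jk inl_cycle_edge (eqxx (ordS j)) orbT.
rewrite !inl_cycle_edge => /orP [/eqP jSk | /eqP /ordS_inj //] /orP [/eqP // | /eqP jk'].
by move: (ordSS_neq k N_gt2); rewrite -jk' jSk eqxx.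
Qed.

Lemma whisker_inj : injective whisker.
Proof. by move=> j k jk; have := inr_whisker j j; rewrite jk inr_whisker eqxx => /eqP. Qed.

Lemma cycle_edge_neq_whisker j k : cycle_edge j != whisker k.
Proof. by apply/eqP => jk; have := inr_whisker k k; rewrite -jk inr_cycle_edge eqxx. Qed.

Lemma uniq_WC_star j : uniq [:: cycle_edge (ord_pred j); cycle_edge j; whisker j].
Proof.
rewrite /= !inE (inj_eq cycle_edge_inj) !(negbTE (cycle_edge_neq_whisker _ _)) orbF.
by rewrite eq_sym -{1}(ord_predK j) ordS_neq // ltnW.
Qed.

Lemma inl_WC_edge j e :
  (inl j \in val e) = (e \in [set cycle_edge (ord_pred j); cycle_edge j; whisker j]).
Proof.
case: (WC_edgeP e) => -[k ->].
  rewrite inl_cycle_edge !inE !(inj_eq cycle_edge_inj) (negbTE (cycle_edge_neq_whisker _ _)).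
  by rewrite eq_ordS orbF orbC [k == j]eq_sym [k == _]eq_sym.
rewrite inl_whisker !inE (inj_eq whisker_inj) ![whisker _ == _]eq_sym.
by rewrite !(negbTE (cycle_edge_neq_whisker _ _)) eq_sym.
Qed.

Lemma inr_WC_edge j e : (inr j \in val e) = (e == whisker j).
Proof.
case: (WC_edgeP e) => -[k ->].
  by rewrite inr_cycle_edge (negbTE (cycle_edge_neq_whisker _ _)).
by rewrite inr_whisker (inj_eq whisker_inj) eq_sym.
Qed.

Lemma M2_WC F : M2 (WC_edges n) F =
  [forall j, ~~ [&& cycle_edge (ord_pred j) \in F, cycle_edge j \in F & whisker j \in F]].
Proof.
have deg_inl j : [set e | (e \in F) && (inl j \in val e)] =
                 F :&: [set cycle_edge (ord_pred j); cycle_edge j; whisker j].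
  by apply/setP => e; rewrite [RHS]inE -inl_WC_edge inE.
apply/forallP/forallP => M j.
  by have := M (inl j); rewrite deg_inl card_setI_set3 ?uniq_WC_star.
case: j => j; first by rewrite deg_inl card_setI_set3 ?uniq_WC_star.
have <- : F :&: [set whisker j] = [set e | (e \in F) && (inr j \in val e)].
  by apply/setP => e; rewrite !inE inr_WC_edge.
by rewrite (leq_trans (subset_leq_card (subsetIr _ _))) // cards1.
Qed.

(* For odd j, with c the weight of the cycle edge {j, j+1} and a = t s, where s
   is the weight of the whisker at j: the cycle edge keeps (c - a)^+, the
   whisker at j+1 gains (a - c)^+ only once that cycle edge is empty, and the
   whisker at j-1 gains 2 min(c, a) only while c and s are positive, i.e. while
   the 2-matching condition at j forces the cycle edge {j-1, j} to be empty. *)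
Definition transfer j (t : R) (x : EW -> R) e : R :=
  let c := x (cycle_edge j) in let a := t * x (whisker j) in
  (if e == cycle_edge j then Num.max 0 (c - a) - c else 0)
  - (if e == whisker j then a else 0)
  + (if e == whisker (ordS j) then Num.max 0 (a - c) else 0)
  + (if e == whisker (ord_pred j) then 2 * Num.min c a else 0).

Definition retract (t : R) (x : EW -> R) e : R :=
  x e + \sum_(j : 'I_(2 * n) | odd j) transfer j t x e.

Lemma retract_cycle_edge t x k : retract t x (cycle_edge k) =
  if odd k then Num.max 0 (x (cycle_edge k) - t * x (whisker k)) else x (cycle_edge k).
Proof.
rewrite /retract /transfer.
under eq_bigr => j _ do
  rewrite (inj_eq cycle_edge_inj) !(negbTE (cycle_edge_neq_whisker _ _)) subr0 !addr0.
by rewrite sum_if_eq; case: ifP; rewrite ?addr0 // addrC subrK.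
Qed.

Lemma retract_whisker t x k : retract t x (whisker k) =
  if odd k then x (whisker k) - t * x (whisker k)
  else x (whisker k)
       + Num.max 0 (t * x (whisker (ord_pred k)) - x (cycle_edge (ord_pred k)))
       + 2 * Num.min (x (cycle_edge (ordS k))) (t * x (whisker (ordS k))).
Proof.
rewrite /retract /transfer.
under eq_bigr => j _ do rewrite [whisker k == _]eq_sym
  !(negbTE (cycle_edge_neq_whisker _ _)) !(inj_eq whisker_inj) add0r eq_ordS eq_ord_pred.
rewrite !big_split /= sumrN !sum_if_eq odd_ordS // odd_ord_pred //.
by case: (odd k) => /=; rewrite ?oppr0 ?addr0 ?add0r ?addrA.
Qed.

Lemma sum_retract t x : \sum_e retract t x e = \sum_e x e.
Proof.
rewrite big_split /= exchange_big /= [X in _ + X]big1 ?addr0 // => j _.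
rewrite /transfer !big_split /= sumrN -!big_mkcond !big_pred1_eq.
by have := max0_subr_add_min (x (cycle_edge j)) (t * x (whisker j)); lra.
Qed.

Section RetractFacts.
Variables (t : R) (x : EW -> R).
Hypotheses (t_ge0 : 0 <= t) (t_le1 : t <= 1) (x_ge0 : forall e, 0 <= x e).

Let tx_ge0 e : 0 <= t * x e. Proof. exact: mulr_ge0. Qed.

Lemma retract_ge0 e : 0 <= retract t x e.
Proof.
case: (WC_edgeP e) => -[k ->]; rewrite ?retract_cycle_edge ?retract_whisker.
  by case: ifP; rewrite // le_max lexx.
case: ifP => _; first by rewrite -{1}[x _]mul1r -mulrBl mulr_ge0 ?subr_ge0.
by rewrite !addr_ge0 ?mulr_ge0 ?le_max ?le_min ?lexx ?x_ge0 ?tx_ge0 ?ler0n.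
Qed.

Lemma retract_M2 : M2 (WC_edges n) [set e | x e != 0] ->
  M2 (WC_edges n) [set e | retract t x e != 0].
Proof.
have supp (z : EW -> R) : (forall e, 0 <= z e) -> [set e | z e != 0] = [set e | 0 < z e].
  by move=> z_ge0; apply/setP => e; rewrite !inE lt0r z_ge0 andbT.
rewrite !supp //; last exact: retract_ge0.
rewrite !M2_WC => /forallP xM; apply/forallP => j; rewrite !inE.
rewrite !retract_cycle_edge retract_whisker odd_ord_pred //; case: (odd j) => /=.
  rewrite max0r_gt0; move: (xM j); apply: contra; rewrite !inE => /and3P [-> ca sa] /=.
  by apply/andP; split; have := tx_ge0 (whisker j); lra.
apply/negP => /and3P []; rewrite max0r_gt0 => ca cj.
have -> : Num.max 0 (t * x (whisker (ord_pred j)) - x (cycle_edge (ord_pred j))) = 0.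
  by apply/max_idPl; rewrite subr_le0 ltW // -subr_gt0.
rewrite addr0 => w_gt0; have [sj | sj] := ltP 0 (x (whisker j)).
  move/negP: (xM j); apply; rewrite !inE cj sj !andbT.
  by have := tx_ge0 (whisker (ord_pred j)); lra.
have : 0 < Num.min (x (cycle_edge (ordS j))) (t * x (whisker (ordS j))) by lra.
rewrite lt_min => /andP [c1 a1].
have s1 : 0 < x (whisker (ordS j)).
  by rewrite lt0r x_ge0 andbT; apply: contraTneq a1 => ->; rewrite mulr0 ltxx.
by move/negP: (xM (ordS j)); apply; rewrite !inE ordSK cj c1 s1.
Qed.

End RetractFacts.

Lemma retract_realization t x : 0 <= t <= 1 ->
  realization (M2 (WC_edges n)) x -> realization (M2 (WC_edges n)) (retract t x).
Proof.
move=> /andP [t_ge0 t_le1] [x_ge0 [x1 xM]]; split; first exact: retract_ge0.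
by rewrite sum_retract; split=> //; exact: retract_M2.
Qed.

Lemma retract_id t x : (forall e, 0 <= x e) -> (forall k, odd k -> t * x (whisker k) = 0) ->
  retract t x = x.
Proof.
move=> x_ge0 a0; apply: funext => e; case: (WC_edgeP e) => -[k ->].
  rewrite retract_cycle_edge; case: ifP => // ok.
  by rewrite a0 // subr0; apply/max_idPr.
rewrite retract_whisker; case: ifP => ok; first by rewrite a0 // subr0.
rewrite !a0 ?odd_ord_pred ?odd_ordS ?ok // sub0r.
rewrite (max_idPl _) ?oppr_le0 // (min_idPr _) //.
by rewrite mulr0 !addr0.
Qed.

Lemma retract_continuous e :
  continuous (fun p : R * {ptws EW -> R} => retract p.1 p.2 e).
Proof.
have coordC e' : continuous (fun p : R * {ptws EW -> R} => p.2 e').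
  move=> p; apply: (@continuous_comp _ _ _ snd (fun y : {ptws EW -> R} => y e')).
    exact: cvg_snd.
  exact: proj_continuous.
have ifC (b : bool) (f : R * {ptws EW -> R} -> R) :
    continuous f -> continuous (fun p => if b then f p else 0).
  by move=> fC; case: b => //; exact: cst_continuous.
apply: continuous_add; first exact: coordC.
apply: (continuous_big (@add_continuous R^o)) => j _; rewrite /transfer.
have cC := coordC (cycle_edge j).
have aC : continuous (fun p : R * {ptws EW -> R} => p.1 * p.2 (whisker j)).
  by apply: continuous_mul; [move=> p; exact: cvg_fst | exact: coordC].
apply: continuous_add; first apply: continuous_add; first apply: continuous_sub.
all: apply: ifC.
- apply: continuous_sub => //.
  by apply: continuous_maxr; [exact: cst_continuous | exact: continuous_sub].
- exact: aC.
- by apply: continuous_maxr; [exact: cst_continuous | exact: continuous_sub].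
- by apply: continuous_mul; [exact: cst_continuous | exact: continuous_minr].
Qed.

End WhiskeredCycle.

Section ClawedCycle.
Variable n : nat.

Local Notation EW := (edge_type (WC_edges n)).
Local Notation EC := (edge_type (CC_edges n)).
Implicit Types (i : 'I_n) (j k : 'I_(2 * n)) (e : EW).

Fact even_ord_subproof (i : 'I_n) : (2 * i < 2 * n)%N.
Proof. by rewrite ltn_pmul2l. Qed.
Fact odd_ord_subproof (i : 'I_n) : ((2 * i).+1 < 2 * n)%N.
Proof. have := ltn_ord i; lia. Qed.
Fact half_ord_subproof (j : 'I_(2 * n)) : (j./2 < n)%N.
Proof. by rewrite ltn_half_double -mul2n ltn_ord. Qed.

Definition even_ord i : 'I_(2 * n) := Ordinal (even_ord_subproof i).
Definition odd_ord i : 'I_(2 * n) := Ordinal (odd_ord_subproof i).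
Definition half_ord j : 'I_n := Ordinal (half_ord_subproof j).

Lemma odd_even_ord i : odd (even_ord i) = false.
Proof. by rewrite /= oddM. Qed.

Lemma even_ordK j : ~~ odd j -> even_ord (half_ord j) = j.
Proof. by move=> ej; apply: val_inj; rewrite /= -{2}(odd_double_half j) (negbTE ej) mul2n. Qed.

Lemma odd_ordK j : odd j -> odd_ord (half_ord j) = j.
Proof. by move=> oj; apply: val_inj; rewrite /= -{2}(odd_double_half j) oj mul2n. Qed.

Lemma ordS_even_ord i : ordS (even_ord i) = odd_ord i.
Proof. by apply: val_inj; rewrite /= modn_small // odd_ord_subproof. Qed.

Lemma ordS_odd_ord i : ordS (odd_ord i) = even_ord (ordS i).
Proof. by apply: val_inj; rewrite /= muln_modr mulnS. Qed.

Definition CC_to_WC (v : CC_vertex n) : WC_vertex n :=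
  match v with
  | inl (inl i) => inl (even_ord i)
  | inl (inr i) => inl (odd_ord i)
  | inr i => inr (even_ord i)
  end.

Lemma CC_to_WC_inj : injective CC_to_WC.
Proof.
case=> [[i|i]|i] [[k|k]|k] //= [] ik; try lia.
all: by rewrite (_ : i = k) //; apply: val_inj => /=; lia.
Qed.

Lemma CC_to_WC_pair (u v : CC_vertex n) :
  CC_to_WC @: [set u; v] = [set CC_to_WC u; CC_to_WC v].
Proof. by rewrite imsetU1 imset_set1. Qed.

Lemma CC_to_WC_edge (e : EC) : CC_to_WC @: val e \in WC_edges n.
Proof.
case/setUP: (valP e) => [/setUP [] | ] /imsetP [i _ ->]; rewrite CC_to_WC_pair /=.
- by rewrite -ordS_even_ord cycle_edge_subproof.
- by rewrite -ordS_odd_ord cycle_edge_subproof.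
- exact: whisker_subproof.
Qed.

Definition CC_edge_map : EC -> EW := edge_map CC_to_WC_edge.

Lemma CC_edge_map_inj : injective CC_edge_map.
Proof. exact: (edge_map_inj CC_to_WC_inj). Qed.

Lemma M2_CC F : M2 (CC_edges n) F = M2 (WC_edges n) (CC_edge_map @: F).
Proof. exact: (M2_edge_map CC_to_WC_inj). Qed.

Fact CC_left_subproof i : [set inl (inl i); inl (inr i)] \in CC_edges n.
Proof. by rewrite !inE; apply/orP; left; apply/orP; left; apply/imsetP; exists i. Qed.
Fact CC_right_subproof i : [set inl (inr i); inl (inl (ordS i))] \in CC_edges n.
Proof. by rewrite !inE; apply/orP; left; apply/orP; right; apply/imsetP; exists i. Qed.
Fact CC_leaf_subproof i : [set inl (inl i); inr i] \in CC_edges n.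
Proof. by rewrite !inE; apply/orP; right; apply/imsetP; exists i. Qed.

Lemma notin_codom_CC_edge_map e :
  e \notin codom CC_edge_map -> exists2 k : 'I_(2 * n), odd k & e = whisker k.
Proof.
case: (WC_edgeP e) => -[k ->]; have [ok | ek] := boolP (odd k); last 2 first.
- by move=> _; exists k.
- rewrite (codom_edge_map _ (CC_leaf_subproof (half_ord k))) //.
  by rewrite CC_to_WC_pair /= even_ordK.
- rewrite (codom_edge_map _ (CC_right_subproof (half_ord k))) //.
  by rewrite CC_to_WC_pair /= -ordS_odd_ord odd_ordK.
rewrite (codom_edge_map _ (CC_left_subproof (half_ord k))) //.
by rewrite CC_to_WC_pair /= -ordS_even_ord even_ordK.
Qed.

Lemma odd_whisker_notin_codom k : odd k -> whisker k \notin codom CC_edge_map.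
Proof.
move=> ok; apply/codomP => -[e' ke'].
have : inr k \in val (whisker k) by rewrite inr_whisker.
by rewrite ke' => /imsetP [[[u | u] | u] _ //= [] kE]; move: ok; rewrite kE odd_even_ord.
Qed.

End ClawedCycle.

Theorem mainTheorem9 (n : nat) : (3 <= n)%N ->
  homotopy_equivalent (realization (M2 (WC_edges n)))
                      (realization (M2 (CC_edges n))).
Proof.
move=> n_ge3; have n_gt1 : (1 < n)%N by apply: leq_trans n_ge3.
apply: (realization_retract_homotopy_equivalent (@CC_edge_map_inj n) (@M2_CC n)
  (r := @retract n)).
- by move=> e; exact: retract_continuous.
- by move=> t x; exact: retract_realization.
- by move=> x [x_ge0 _]; apply: retract_id => // k _; rewrite mul0r.
- by move=> x _ e /notin_codom_CC_edge_map [k ok ->]; rewrite retract_whisker ok mul1r subrr.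
move=> x [x_ge0 _] x_out; apply: retract_id => // k ok.
by rewrite x_out ?mulr0 ?odd_whisker_notin_codom.
Qed.
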